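(* Let $\mathbb{K}=(K,+,\times,0,1)$ be a semiring. The following are equivalent: (1) $\mathbb{K}$ is additively absorptive and multiplicatively idempotent; (2) $\mathbb{K}$ is additively positive and the inner consistency property holds for $\mathbb{K}$-relations via the standard $\mathbb{K}$-join.
   Context: A semiring: $(K,+,0)$ and $(K,\times,1)$ commutative monoids, $\times$ distributes over $+$, $0\times p=0$. Additively positive: $p+q=0$ implies $p=q=0$. Additively absorptive: $p+p\times q=p$ for all $p,q$. Multiplicatively idempotent: $p\times p=p$ for all $p$. Attributes have domains (arbitrary sets); for a finite attribute set $X$, an $X$-tuple assigns each attribute a value in its domain; $t[Y]$ is restriction. A $\mathbb{K}$-relation over $X$ is a function $R$ from $X$-tuples to $K$ with finite support $R'$; marginals $R[Y](t)=\sum_{r\in R',r[Y]=t}R(r)$. $R(X),S(Y)$ are inner consistent if $R[X\cap Y]=S[X\cap Y]$. The standard $\mathbb{K}$-join of $R(X)$ and $S(Y)$ is the $\mathbb{K}$-relation $W$ over $X\cup Y$ with $W(t)=R(t[X])\times S(t[Y])$. The inner consistency property holds for $\mathbb{K}$-relations via the standard $\mathbb{K}$-join if for any two inner consistent $\mathbb{K}$-relations $R(X),S(Y)$, their standard $\mathbb{K}$-join $W$ satisfies $W[X]=R$ and $W[Y]=S$. *)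

From HB Require Import structures.
From mathcomp Require Import all_boot all_order all_algebra finmap.
From mathcomp Require Import boolp classical_sets cardinality fsbigop.

Set Implicit Arguments.
Unset Strict Implicit.
Unset Printing Implicit Defensive.
Import GRing.Theory.
Local Open Scope ring_scope.


Definition add_positive (K : comPzSemiRingType) : Prop :=
  forall p q : K, p + q = 0 -> p = 0 /\ q = 0.
Definition add_absorptive (K : comPzSemiRingType) : Prop :=
  forall p q : K, p + p * q = p.
Definition mul_idempotent (K : comPzSemiRingType) : Prop :=
  forall p : K, p * p = p.

(* Attributes of type A, attribute a has domain D a.
   An X-tuple assigns to each attribute of the finite set X a value of its domain. *)
Definition Xtuple (A : choiceType) (D : A -> choiceType) (X : {fset A}) :=
  {dffun forall a : X, D (fsval a)}.

Definition restr (A : choiceType) (D : A -> choiceType) (X Y : {fset A})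
  (H : (Y `<=` X)%fset) (t : Xtuple D X) : Xtuple D Y :=
  [ffun a : Y => t (fincl H a)].

(* A K-relation over X: a function from X-tuples to K (finite support is
   imposed separately by [finite_supp]). *)
Definition Krel (K : comPzSemiRingType) (A : choiceType) (D : A -> choiceType)
  (X : {fset A}) := Xtuple D X -> K.

Definition finite_supp (K : comPzSemiRingType) (A : choiceType)
  (D : A -> choiceType) (X : {fset A}) (R : Krel K D X) : Prop :=
  finite_set [set t | R t != 0].

Definition marginal (K : comPzSemiRingType) (A : choiceType)
  (D : A -> choiceType) (X Y : {fset A}) (H : (Y `<=` X)%fset) (R : Krel K D X)
  : Krel K D Y :=
  fun t => (\sum_(r \in [set r | R r != 0 /\ restr H r = t]) R r)%R.

Definition inner_consistent (K : comPzSemiRingType) (A : choiceType)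
  (D : A -> choiceType) (X Y : {fset A}) (R : Krel K D X) (S : Krel K D Y) : Prop :=
  marginal (fsubsetIl X Y) R = marginal (fsubsetIr X Y) S.

Definition std_join (K : comPzSemiRingType) (A : choiceType)
  (D : A -> choiceType) (X Y : {fset A}) (R : Krel K D X) (S : Krel K D Y)
  : Krel K D (X `|` Y)%fset :=
  fun t => R (restr (fsubsetUl X Y) t) * S (restr (fsubsetUr X Y) t).

Definition inner_consistency_property (K : comPzSemiRingType) : Prop :=
  forall (A : choiceType) (D : A -> choiceType) (X Y : {fset A})
         (R : Krel K D X) (S : Krel K D Y),
    finite_supp R -> finite_supp S ->
    inner_consistent R S ->
    marginal (fsubsetUl X Y) (std_join R S) = R /\
    marginal (fsubsetUr X Y) (std_join R S) = S.

(* (1) => (2): the extensions of an X-tuple r to X u Y correspond bijectively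
   to the Y-tuples agreeing with r on X n Y, so the standard join W satisfies
   W[X](r) = R(r) * S[X n Y](r[X n Y]) = R(r) * R[X n Y](r[X n Y]) by inner
   consistency.  The last marginal is R(r) + s for some s, and
   R(r) * (R(r) + s) = R(r) by idempotence and absorption.  Absorption with
   q = 1 makes addition idempotent, which yields additive positivity.
   (2) => (1): with one boolean attribute, X = {a} and Y = {}, the relations
   R(a:true) = p, R(a:false) = q and S() = p + q are inner consistent, and
   W[X](a:true) = p * (p + q). *)
From mathcomp Require Import all_boot all_algebra finmap.
From mathcomp Require Import boolp classical_sets functions cardinality fsbigop.

Set Implicit Arguments.
Unset Strict Implicit.
Unset Printing Implicit Defensive.
Import GRing.Theory.
Local Open Scope ring_scope.
Local Open Scope classical_set_scope.

Section Tuples.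
Variables (A : choiceType) (D : A -> choiceType).

Lemma xtuple_irr (X : {fset A}) (t : Xtuple D X) (a : A) (h h' : a \in X) :
  t [` h]%fset = t [` h']%fset.
Proof. by rewrite (bool_irrelevance h h'). Qed.

Lemma restrE (X Y : {fset A}) (H : (Y `<=` X)%fset) (t : Xtuple D X) (a : A)
    (hY : a \in Y) (hX : a \in X) :
  restr H t [` hY]%fset = t [` hX]%fset.
Proof. by rewrite ffunE /fincl /=; apply: xtuple_irr. Qed.

Lemma xtupleP (X : {fset A}) (t t' : Xtuple D X) :
  (forall a (h : a \in X), t [` h]%fset = t' [` h]%fset) -> t = t'.
Proof. by move=> tt'; apply/ffunP => -[a h]; apply: tt'. Qed.

Lemma setT_xtuple_fset0 (X : {fset A}) (t : Xtuple D X) :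
  X = fset0 -> [set: Xtuple D X] = [set t].
Proof.
move=> X0; apply/seteqP; split => // t' _ /=.
by apply: xtupleP => a h; exfalso; move: h; rewrite X0 in_fset0.
Qed.

Lemma finite_supp_fset0 (K : comPzSemiRingType) (X : {fset A}) (R : Krel K D X) :
  X = fset0 -> finite_supp R.
Proof.
move=> X0; apply: sub_finite_set (_ : finite_set setT) => //.
have [[t _]|/nonemptyPn ->] := pselect ([set: Xtuple D X] !=set0).
  by rewrite (setT_xtuple_fset0 t X0); apply: finite_set1.
exact: finite_set0.
Qed.

Lemma marginalE (K : comPzSemiRingType) (X Y : {fset A}) (H : (Y `<=` X)%fset)
    (R : Krel K D X) (t : Xtuple D Y) :
  marginal H R t = \sum_(r \in [set r | restr H r = t]) R r.
Proof.
rewrite /marginal [RHS]fsbig_supp; apply: eq_fsbigl.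
by apply/seteqP; split => r /=; [case=> /eqP | case=> ? /eqP].
Qed.

Lemma marginal_fset0 (K : comPzSemiRingType) (X Y : {fset A})
    (H : (Y `<=` X)%fset) (R : Krel K D X) (t : Xtuple D Y) :
  Y = fset0 -> marginal H R t = \sum_(r \in [set: Xtuple D X]) R r.
Proof.
move=> Y0; rewrite marginalE; apply: eq_fsbigl; apply/seteqP; split => // r _.
by have : [set t] (restr H r) by rewrite -(setT_xtuple_fset0 t Y0).
Qed.

Section Glue.
Variables (X Y U : {fset A}) (hU : (U `<=` X `|` Y)%fset).

Lemma in_fsetUr_notin (c : U) : fsval c \notin X -> fsval c \in Y.
Proof. by move=> nX; have := fsubsetP hU _ (fsvalP c); rewrite in_fsetU (negbTE nX). Qed.

Definition glue (r : Xtuple D X) (s : Xtuple D Y) : Xtuple D U :=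
  [ffun c => match Sumbool.sumbool_of_bool (fsval c \in X) with
             | left hX => r [` hX]%fset
             | right nX => s [` in_fsetUr_notin (negbT nX)]%fset
             end].

Lemma glue_l r s a (h : a \in U) (hX : a \in X) :
  glue r s [` h]%fset = r [` hX]%fset.
Proof.
rewrite ffunE /=; case: Sumbool.sumbool_of_bool => [hX'|nX]; first exact: xtuple_irr.
by exfalso; rewrite hX in nX.
Qed.

Lemma glue_r r s a (h : a \in U) (nX : a \notin X) (hY : a \in Y) :
  glue r s [` h]%fset = s [` hY]%fset.
Proof.
rewrite ffunE /=; case: Sumbool.sumbool_of_bool => [hX|nX']; last exact: xtuple_irr.
by exfalso; rewrite hX in nX.
Qed.

Variables (Z : {fset A}) (hXU : (X `<=` U)%fset) (hYU : (Y `<=` U)%fset).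
Variables (hZX : (Z `<=` X)%fset) (hZY : (Z `<=` Y)%fset) (hI : (X `&` Y `<=` Z)%fset).

Lemma restr_glue_l r s : restr hXU (glue r s) = r.
Proof.
apply: xtupleP => a h; rewrite (restrE _ _ h (fsubsetP hXU _ h)).
exact: glue_l.
Qed.

Lemma restr_glue_r r s : restr hZY s = restr hZX r -> restr hYU (glue r s) = s.
Proof.
move=> /ffunP sr; apply: xtupleP => a h; rewrite (restrE _ _ h (fsubsetP hYU _ h)).
have [hX|nX] := boolP (a \in X); last exact: glue_r.
have hZ : a \in Z by apply: (fsubsetP hI); rewrite in_fsetI hX h.
by rewrite (glue_l _ _ _ hX) -(restrE hZY s hZ h) sr (restrE _ _ hZ hX).
Qed.

Lemma glue_bij (r : Xtuple D X) :
  set_bij [set s | restr hZY s = restr hZX r] [set t | restr hXU t = r] (glue r).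
Proof.
split=> [s _ | s s' /[!inE] rs rs' e | t /= tr]; first exact: restr_glue_l.
  by rewrite -(restr_glue_r rs) -(restr_glue_r rs') e.
exists (restr hYU t).
  apply: xtupleP => a h; rewrite -tr.
  rewrite (restrE _ _ h (fsubsetP hZY _ h)) (restrE _ _ h (fsubsetP hZX _ h)).
  have hU' := fsubsetP hXU _ (fsubsetP hZX _ h).
  by rewrite (restrE hYU t _ hU') (restrE hXU t _ hU').
apply: xtupleP => a h; have [hX|nX] := boolP (a \in X).
  by rewrite (glue_l _ _ _ hX) -tr (restrE _ _ hX h).
have hY : a \in Y by have := fsubsetP hU _ h; rewrite in_fsetU (negbTE nX).
by rewrite (glue_r _ _ _ nX hY) (restrE _ _ hY h).
Qed.

End Glue.
End Tuples.

Section Join.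
Variables (K : comPzSemiRingType) (A : choiceType) (D : A -> choiceType).
Variables (X Y U Z : {fset A}) (hXU : (X `<=` U)%fset) (hYU : (Y `<=` U)%fset).
Variables (hU : (U `<=` X `|` Y)%fset) (hZX : (Z `<=` X)%fset) (hZY : (Z `<=` Y)%fset).
Variable (hI : (X `&` Y `<=` Z)%fset).

Definition join (R : Krel K D X) (S : Krel K D Y) : Krel K D U :=
  fun t => R (restr hXU t) * S (restr hYU t).

Lemma marginal_join (R : Krel K D X) (S : Krel K D Y) (r : Xtuple D X) :
  finite_supp S -> marginal hXU (join R S) r = R r * marginal hZY S (restr hZX r).
Proof.
move=> finS; rewrite !marginalE.
rewrite (reindex_fsbig _ _ _ _ (glue_bij hU hXU hYU hZX hZY hI r)).
rewrite full_fsbig_distrr; last by apply: sub_finite_set finS => s [_ /eqP].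
apply: eq_fsbigr => s /[!inE] sr.
by rewrite /join restr_glue_l (restr_glue_r _ _ hI sr).
Qed.

Lemma marginal_join_id (R : Krel K D X) (S : Krel K D Y) :
  add_absorptive K -> mul_idempotent K -> finite_supp R -> finite_supp S ->
  marginal hZX R = marginal hZY S -> marginal hXU (join R S) = R.
Proof.
move=> absK idemK finR finS RS; apply: funext => r.
rewrite marginal_join // -RS marginalE.
have [->|Rr0] := eqVneq (R r) 0; first by rewrite mul0r.
rewrite fsbig_supp (fsbigD1 r) /=; first by rewrite mulrDr idemK absK.
  by apply: sub_finite_set finR => r' [_ /eqP].
by split=> //; apply/eqP.
Qed.

End Join.

Lemma joinC (K : comPzSemiRingType) (A : choiceType) (D : A -> choiceType)
    (X Y U : {fset A}) (hXU : (X `<=` U)%fset) (hYU : (Y `<=` U)%fset)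
    (R : Krel K D X) (S : Krel K D Y) :
  join hXU hYU R S = join hYU hXU S R.
Proof. by apply: funext => t; rewrite /join mulrC. Qed.

Lemma absorptive_add_positive (K : comPzSemiRingType) :
  add_absorptive K -> add_positive K.
Proof.
move=> absK p q pq0; have addKK (x : K) : x + x = x by have := absK x 1; rewrite mulr1.
by split; rewrite -[LHS]addr0 -pq0; [rewrite addrA | rewrite addrCA]; rewrite addKK.
Qed.

Lemma absorptive_idempotent_icp (K : comPzSemiRingType) :
  add_absorptive K -> mul_idempotent K -> inner_consistency_property K.
Proof.
move=> absK idemK A D X Y R S finR finS RS; split.
  exact: (marginal_join_id (fsubsetUl X Y) (fsubsetUr X Y) (fsubset_refl _)
    (fsubset_refl _) absK idemK finR finS RS).
have -> : std_join R S = join (fsubsetUr X Y) (fsubsetUl X Y) S R by apply: joinC.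
have hU : (X `|` Y `<=` Y `|` X)%fset by rewrite fsetUC.
have hI : (Y `&` X `<=` X `&` Y)%fset by rewrite fsetIC.
exact: (marginal_join_id (fsubsetUr X Y) (fsubsetUl X Y) hU hI absK idemK
  finS finR (esym RS)).
Qed.

Definition bool_dom : unit -> choiceType := fun=> bool.
Definition Xtt : {fset unit} := [fset tt]%fset.
Definition btuple (b : bool) : Xtuple bool_dom Xtt := [ffun=> b].

Lemma setT_btuple :
  [set: Xtuple bool_dom Xtt] = [set btuple true] `|` [set btuple false].
Proof.
apply/seteqP; split => // t _.
have -> : t = btuple (t [` fset11 tt]%fset).
  by apply: xtupleP => -[] h; rewrite ffunE; apply: xtuple_irr.
by case: (t _); [left | right].
Qed.

Lemma finite_supp_btuple (K : comPzSemiRingType) (R : Krel K bool_dom Xtt) :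
  finite_supp R.
Proof.
apply: sub_finite_set (_ : finite_set setT) => //.
by rewrite setT_btuple finite_setU; split; apply: finite_set1.
Qed.

Lemma fsbig_btuple (M : nmodType) (F : Xtuple bool_dom Xtt -> M) :
  \sum_(t \in [set: Xtuple bool_dom Xtt]) F t = F (btuple true) + F (btuple false).
Proof.
rewrite setT_btuple fsbigU0 ?fsbig_set1 //; try exact: finite_set1.
move=> t [/= -> /(congr1 (fun t : Xtuple bool_dom Xtt => t [` fset11 tt]%fset))].
by rewrite !ffunE.
Qed.

Lemma icp_mulr_addr_id (K : comPzSemiRingType) (p q : K) :
  inner_consistency_property K -> p * (p + q) = p.
Proof.
move=> icp.
pose R : Krel K bool_dom Xtt := fun t => if t [` fset11 tt]%fset then p else q.
pose S : Krel K bool_dom fset0 := fun=> p + q.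
pose e : Xtuple bool_dom fset0 := restr (fsub0set Xtt) (btuple true).
have sumS : \sum_(s \in [set: Xtuple bool_dom fset0]) S s = p + q.
  by rewrite (setT_xtuple_fset0 e) // fsbig_set1.
have finR : finite_supp R := finite_supp_btuple R.
have finS : finite_supp S by apply: finite_supp_fset0.
have RS : inner_consistent R S.
  by apply: funext => z; rewrite !marginal_fset0 ?fsetI0 // sumS fsbig_btuple /R !ffunE.
have [WR _] := icp _ _ _ _ R S finR finS RS.
have := congr1 (fun W => W (btuple true)) WR.
rewrite /= (marginal_join _ _ (fsubset_refl _) (fsubsetIl _ _) (fsubsetIr _ _)
  (fsubset_refl _) R (btuple true) finS).
by rewrite marginal_fset0 ?fsetI0 // sumS /R ffunE.
Qed.

Theorem proposition19 (K : comPzSemiRingType) :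
  (add_absorptive K /\ mul_idempotent K) <->
  (add_positive K /\ inner_consistency_property K).
Proof.
split=> [[absK idemK] | [_ icp]].
  by split; [apply: absorptive_add_positive | apply: absorptive_idempotent_icp].
have idemK : mul_idempotent K.
  by move=> p; rewrite -[RHS](icp_mulr_addr_id p 0 icp) addr0.
by split=> // p q; rewrite -[RHS](icp_mulr_addr_id p q icp) mulrDr idemK.
Qed.
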